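(* Let $\mathcal X$ be finite with $N=|\mathcal X|\ge2$, $c\in(0,1/N]$, $\varepsilon\ge0$, and let $K\in\mathcal M(\varepsilon,c)$. Then for all $P_X,Q_X\in\mathcal Q_{\mathcal X}(c)$ with $\mathrm{TV}(P_X\|Q_X)\le\delta$, $$D(K\circ P_X\|K\circ Q_X)\le\Xi(\varepsilon,c)\,\log\big((1-Nc)e^\varepsilon+1\big)\,\delta,$$ where $\Xi(\varepsilon,c)=\min\left\{\frac{e^\varepsilon-1}{e^\varepsilon(1-Nc)+1},1\right\}$.
   Context: $D(P\|Q)=\sum_y P(y)\log\frac{P(y)}{Q(y)}$ is relative entropy (natural log) and $\mathrm{TV}(P\|Q)=\frac12\sum|P-Q|$. A kernel $K$ is a row-stochastic matrix with entries $K_{Y|X=x}(y)$, $(K\circ P_X)(y)=\sum_xK_{Y|X=x}(y)P_X(x)$. PML: $\ell_{K\times P_X}(X\to y)=\log\frac{\max_x K_{Y|X=x}(y)}{(K\circ P_X)(y)}$ for full-support $P_X$ and $(K\circ P_X)(y)>0$. $\mathcal Q_{\mathcal X}(c)=\{P_X:\min_xP_X(x)\ge c\}$; $C(K,\mathcal P)=\sup_{P_X\in\mathcal P}\sup_{y:(K\circ P_X)(y)>0}\ell_{K\times P_X}(X\to y)$; $\mathcal M(\varepsilon,c)$ is the set of kernels from $\mathcal X$ to a finite output set with $C(K,\mathcal Q_{\mathcal X}(c))\le\varepsilon$. *)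

From HB Require Import structures.
From mathcomp Require Import all_boot all_order all_algebra.
From mathcomp Require Import reals sequences exp.
Set Implicit Arguments. Unset Strict Implicit. Unset Printing Implicit Defensive.
Import Order.TTheory GRing.Theory Num.Theory.
Local Open Scope ring_scope.

Section Defs.
Variable R : realType.

Definition is_distr (T : finType) (P : T -> R) : Prop :=
  (forall t, 0 <= P t) /\ \sum_t P t = 1.

(* row-stochastic kernel: K x y = K_{Y|X=x}(y) *)
Definition is_kernel (X Y : finType) (K : X -> Y -> R) : Prop :=
  forall x, is_distr (K x).

Definition push (X Y : finType) (K : X -> Y -> R) (P : X -> R) : Y -> R :=
  fun y => \sum_x K x y * P x.

Definition KL (T : finType) (P Q : T -> R) : R :=
  \sum_(t | P t != 0) P t * ln (P t / Q t).

Definition TV (T : finType) (P Q : T -> R) : R :=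
  2^-1 * \sum_t `|P t - Q t|.

Definition PML (X Y : finType) (K : X -> Y -> R) (P : X -> R) (y : Y) : R :=
  ln ((\big[Num.max/0]_x K x y) / push K P y).

Definition Qc (X : finType) (c : R) (P : X -> R) : Prop :=
  is_distr P /\ forall x, c <= P x.

(* C(K, Q_X(c)) <= eps, i.e. the supremum is bounded by eps *)
Definition C_le (X Y : finType) (K : X -> Y -> R) (c eps : R) : Prop :=
  forall P : X -> R, Qc c P ->
  forall y, 0 < push K P y -> PML K P y <= eps.

Definition in_M (X Y : finType) (eps c : R) (K : X -> Y -> R) : Prop :=
  is_kernel K /\ C_le K c eps.

Definition Xi (X : finType) (eps c : R) : R :=
  Num.min ((expR eps - 1) / (expR eps * (1 - #|X|%:R * c) + 1)) 1.

End Defs.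

From HB Require Import structures.
From mathcomp Require Import all_boot all_order all_algebra.
From mathcomp Require Import reals sequences exp.
From mathcomp Require Import ring lra.
Import Order.TTheory GRing.Theory Num.Theory.
Local Open Scope ring_scope.

(* Write b = (1 - N c) e^eps + 1.  Testing the leakage constraint of K at a
   distribution P in Q_X(c) gives K x y <= e^eps (K o P)(y); splitting
   P = c + (P - c) then shows that the output likelihood ratio of any two
   P, Q in Q_X(c) lies in [1/b, b].  On that range the chords of the convex
   function t ln t through t = 1 bound the relative entropy by
   ln b * sum_y ((K o P)(y) - (K o Q)(y))^+.
   This positive part equals sum_x (P x - Q x) K_x(A), where A is the set of
   outputs on which K o P dominates, so it is at most TV(P, Q) times the spread
   max_x K_x(A) - min_x K_x(A).  Testing the constraint at the vertices of
   Q_X(c), which carry mass c + (1 - N c) on one point and c elsewhere, once on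
   A and once on its complement, bounds that spread by Xi. *)

Section SpreadBound.
Context {R : realDomainType} {T : finType}.

Lemma sum_mul_le_spread (r G : T -> R) (xi : R) :
  \sum_t r t = 0 -> (forall t t', G t - G t' <= xi) ->
  \sum_t r t * G t <= xi * \sum_t Num.max (r t) 0.
Proof.
move=> r_sum0 G_spread.
have [t0 _ | T0] := pickP (@predT T); last first.
  by rewrite !big_pred0 ?mulr0.
have [m _ m_min] := @arg_minP _ _ _ t0 xpredT G erefl.
have -> : \sum_t r t * G t = \sum_t r t * (G t - G m).
  under [RHS]eq_bigr do rewrite mulrBr.
  by rewrite sumrB -mulr_suml r_sum0 mul0r subr0.
rewrite mulr_sumr; apply: ler_sum => t _.
have spread_ge0 : 0 <= G t - G m by rewrite subr_ge0 m_min.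
apply: le_trans (_ : Num.max (r t) 0 * (G t - G m) <= _).
  by rewrite ler_wpM2r // le_max lexx.
by rewrite mulrC ler_wpM2r ?le_max ?lexx ?orbT.
Qed.

End SpreadBound.

Section XlnxBounds.
Context {R : realType}.

Lemma xlnx_tangent (s t : R) : 0 < s -> 0 < t ->
  t * ln t + (ln t + 1) * (s - t) <= s * ln s.
Proof.
move=> s_gt0 t_gt0.
have ln_ts : ln (t / s) <= t / s - 1.
  have := @le_ln1Dx R (t / s - 1); rewrite [1 + _]addrC subrK; apply.
  have : 0 < t / s by rewrite divr_gt0.
  lra.
rewrite ln_div ?posrE // in ln_ts.
have := ler_wpM2l (ltW s_gt0) ln_ts.
rewrite !mulrBr mulrCA divff ?gt_eqF // mulr1; nra.
Qed.

Lemma xlnx_chord (x t y : R) : 0 < x -> x <= t -> t <= y ->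
  (y - x) * (t * ln t) <= (y - t) * (x * ln x) + (t - x) * (y * ln y).
Proof.
move=> x_gt0 xt ty.
have t_gt0 : 0 < t by apply: lt_le_trans xt.
have y_gt0 : 0 < y by apply: lt_le_trans ty.
rewrite -subr_ge0 in xt; rewrite -subr_ge0 in ty.
have := ler_wpM2l ty (xlnx_tangent x t x_gt0 t_gt0).
have := ler_wpM2l xt (xlnx_tangent y t y_gt0 t_gt0).
nra.
Qed.

Lemma xlnx_le_ratio_bound (b t : R) : 1 <= b -> b^-1 <= t -> t <= b ->
  (b - 1) * (t * ln t) <= (t - 1) * ln b + (b - 1) * ln b * Num.max (t - 1) 0.
Proof.
move=> b_ge1 bt tb.
have b_gt0 : 0 < b by apply: lt_le_trans ltr01 b_ge1.
case: (lerP 1 t) => [t_ge1 | t_lt1].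
  rewrite max_l ?subr_ge0 //.
  have := xlnx_chord 1 t b ltr01 t_ge1 tb.
  by rewrite ln1 !mulr0 add0r; nra.
rewrite max_r ?mulr0 ?addr0; last by rewrite subr_le0 ltW.
have bV_gt0 : 0 < b^-1 by rewrite invr_gt0.
have := xlnx_chord b^-1 t 1 bV_gt0 bt (ltW t_lt1).
rewrite ln1 !mulr0 addr0 lnV ?posrE // => /(ler_wpM2l (ltW b_gt0)) chord.
have lhs_eq : b * ((1 - b^-1) * (t * ln t)) = (b - 1) * (t * ln t).
  by field; rewrite gt_eqF.
have rhs_eq : b * ((1 - t) * (b^-1 * - ln b)) = (t - 1) * ln b.
  by field; rewrite gt_eqF.
by rewrite -lhs_eq -rhs_eq.
Qed.

Lemma mul_ln_div_le (b p q : R) :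
  1 <= b -> 0 < p -> 0 < q -> p <= b * q -> q <= b * p ->
  (b - 1) * (p * ln (p / q)) <= (p - q) * ln b + (b - 1) * ln b * Num.max (p - q) 0.
Proof.
move=> b_ge1 p_gt0 q_gt0 pq qp.
have bt : b^-1 <= p / q.
  by rewrite ler_pdivlMr // mulrC ler_pdivrMr ?(lt_le_trans ltr01) // mulrC.
have tb : p / q <= b by rewrite ler_pdivrMr.
have bound := ler_wpM2l (ltW q_gt0) (xlnx_le_ratio_bound b (p / q) b_ge1 bt tb).
set t := p / q; have p_eq : p = t * q by rewrite mulfVK ?gt_eqF.
have -> : Num.max (p - q) 0 = q * Num.max (t - 1) 0.
  by rewrite maxr_pMr ?ltW // mulr0 mulrBr mulr1 mulrC -p_eq.
have lhs_eq : q * ((b - 1) * (t * ln t)) = (b - 1) * (p * ln t).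
  by rewrite p_eq; ring.
have rhs_eq : q * ((t - 1) * ln b + (b - 1) * ln b * Num.max (t - 1) 0) =
    (p - q) * ln b + (b - 1) * ln b * (q * Num.max (t - 1) 0).
  by rewrite p_eq; ring.
by rewrite -lhs_eq -rhs_eq.
Qed.

Lemma KL_le_ln_pos_part (T : finType) (p q : T -> R) (b : R) :
  (forall t, 0 <= p t) -> (forall t, 0 <= q t) -> \sum_t p t = \sum_t q t ->
  1 <= b -> (forall t, p t <= b * q t) -> (forall t, q t <= b * p t) ->
  KL p q <= ln b * \sum_t Num.max (p t - q t) 0.
Proof.
move=> p_ge0 q_ge0 sum_pq b_ge1 pq qp.
have [b_eq1 | b_neq1] := eqVneq b 1.
  rewrite b_eq1 ln1 mul0r /KL big1 // => t pt_neq0.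
  have := pq t; have := qp t; rewrite b_eq1 !mul1r => qt_le pt_le.
  have -> : q t = p t by apply/le_anti; rewrite qt_le pt_le.
  by rewrite divff // ln1 mulr0.
have b1_gt0 : 0 < b - 1 by rewrite subr_gt0 lt_def b_neq1.
have p_pos t : p t != 0 -> 0 < p t by rewrite lt_def p_ge0 andbT.
have q_pos t : p t != 0 -> 0 < q t.
  move=> /p_pos pt_gt0; rewrite -(pmulr_rgt0 _ (lt_le_trans ltr01 b_ge1)).
  exact: lt_le_trans pt_gt0 (pq t).
pose F t := (p t - q t) * ln b + (b - 1) * ln b * Num.max (p t - q t) 0.
have sum_F : \sum_(t | p t != 0) F t = \sum_t F t.
  rewrite big_mkcond; apply: eq_bigr => t _; case: eqP => // pt0.
  have qt0 : q t = 0 by apply/le_anti; rewrite q_ge0 andbT -(mulr0 b) -pt0 qp.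
  by rewrite /F pt0 qt0 subrr maxxx mul0r mulr0 addr0.
rewrite -(ler_pM2l b1_gt0) /KL mulr_sumr.
apply: le_trans (_ : \sum_(t | p t != 0) F t <= _).
  by apply: ler_sum => t pt_neq0; apply: mul_ln_div_le; rewrite ?p_pos ?q_pos.
rewrite sum_F big_split /= -mulr_suml -mulr_sumr sumrB sum_pq subrr mul0r add0r.
by rewrite mulrA.
Qed.

End XlnxBounds.

Section Distributions.
Context {R : realType}.

Lemma sum_pos_part_eq_TV (T : finType) (p q : T -> R) :
  \sum_t p t = \sum_t q t -> \sum_t Num.max (p t - q t) 0 = TV p q.
Proof.
move=> sum_pq; under eq_bigr do rewrite maxr_absE addr0 subr0.
by rewrite -mulr_suml big_split /= sumrB sum_pq subrr add0r /TV mulrC.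
Qed.

Context {X Y : finType} (K : X -> Y -> R).

Lemma push_ge0 (P : X -> R) y :
  is_kernel K -> (forall x, 0 <= P x) -> 0 <= push K P y.
Proof.
move=> K_kernel P_ge0; apply: sumr_ge0 => x _.
by apply: mulr_ge0 => //; case: (K_kernel x).
Qed.

Lemma sum_push (P : X -> R) : is_kernel K -> \sum_y push K P y = \sum_x P x.
Proof.
move=> K_kernel; rewrite /push exchange_big /=; apply: eq_bigr => x _.
by rewrite -mulr_suml; case: (K_kernel x) => _ ->; rewrite mul1r.
Qed.

Lemma sum_kernel_entries : is_kernel K -> \sum_y \sum_x K x y = #|X|%:R.
Proof.
move=> K_kernel; rewrite exchange_big /=.
under eq_bigr => x _ do rewrite (proj2 (K_kernel x)).
by rewrite sumr_const.
Qed.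

Definition vertex_distr (c : R) (x0 : X) : X -> R :=
  fun x => c + (1 - #|X|%:R * c) * (x == x0)%:R.

Lemma vertex_distr_Qc (c : R) (x0 : X) :
  0 <= c -> #|X|%:R * c <= 1 -> Qc c (vertex_distr c x0).
Proof.
move=> c_ge0 Nc_le1.
have c_le x : c <= vertex_distr c x0 x.
  by rewrite lerDl mulr_ge0 ?subr_ge0 ?ler0n.
split=> //; split=> [x|]; first exact: le_trans c_ge0 (c_le x).
rewrite big_split /= sumr_const -mulr_sumr (bigD1 x0) //= eqxx.
rewrite big1 ?addr0 ?mulr1; last by move=> x /negbTE ->.
by rewrite -[c *+ _]mulr_natl addrC subrK.
Qed.

Lemma push_vertex_distr (c : R) (x0 : X) y :
  push K (vertex_distr c x0) y = c * \sum_x K x y + (1 - #|X|%:R * c) * K x0 y.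
Proof.
rewrite /push /vertex_distr; under eq_bigr do rewrite mulrDr.
rewrite big_split /= -mulr_suml mulrC; congr (_ + _).
rewrite (bigD1 x0) //= eqxx mulr1 mulrC big1 ?addr0 //.
by move=> x /negbTE ->; rewrite !mulr0.
Qed.

End Distributions.

Lemma Xi_ge0 (R : realType) (X : finType) (eps c : R) :
  0 <= eps -> #|X|%:R * c <= 1 -> 0 <= Xi X eps c.
Proof.
move=> eps_ge0 Nc_le1.
have e_ge1 : 1 <= expR eps by rewrite -expR0 ler_expR.
rewrite /Xi le_min ler01 andbT divr_ge0 ?subr_ge0 //.
by rewrite addr_ge0 ?mulr_ge0 ?expR_ge0 ?subr_ge0.
Qed.

Section LeakageBoundedKernel.
Context {R : realType} {X Y : finType} {c eps : R} {K : X -> Y -> R}.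
Hypotheses (c_gt0 : 0 < c) (K_M : in_M eps c K).

Let K_kernel : is_kernel K := proj1 K_M.
Let K_ge0 x y : 0 <= K x y := proj1 (K_kernel x) y.

Lemma kernel_le_expR_push (P : X -> R) z y :
  Qc c P -> K z y <= expR eps * push K P y.
Proof.
move=> P_Qc; have [[P_ge0 _] P_gec] := P_Qc.
have pushP_ge0 : 0 <= push K P y by apply: push_ge0.
have [push_gt0 | push_le0] := ltrP 0 (push K P y); last first.
  have : K z y * P z <= 0.
    apply: le_trans push_le0; rewrite /push (bigD1 z) //= lerDl.
    by apply: sumr_ge0 => x _; rewrite mulr_ge0.
  rewrite pmulr_lle0 ?(lt_le_trans c_gt0) // => Kzy_le0.
  by apply: le_trans Kzy_le0 _; rewrite mulr_ge0 ?expR_ge0.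
set M := \big[Num.max/0]_x K x y.
apply: le_trans (le_bigmax 0 (fun x => K x y) z) _; rewrite -/M.
have [M_gt0 | M_le0] := ltrP 0 M; last first.
  by apply: le_trans M_le0 _; rewrite mulr_ge0 ?expR_ge0.
have := proj2 K_M P P_Qc y push_gt0.
by rewrite /PML -/M -ler_expR lnK ?posrE ?divr_gt0 // ler_pdivrMr.
Qed.

Hypothesis Nc_le1 : #|X|%:R * c <= 1.

Lemma push_le_ratio (P Q : X -> R) y : Qc c P -> Qc c Q ->
  push K P y <= ((1 - #|X|%:R * c) * expR eps + 1) * push K Q y.
Proof.
move=> P_Qc Q_Qc; have [[_ P_sum1] P_gec] := P_Qc; have [_ Q_gec] := Q_Qc.
have push_split : push K P y = \sum_x K x y * (P x - c) + \sum_x K x y * c.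
  by rewrite -big_split; apply: eq_bigr => x _; rewrite /= -mulrDr subrK.
have sum_excess : \sum_x (P x - c) = 1 - #|X|%:R * c.
  by rewrite sumrB P_sum1 sumr_const mulr_natl.
have excess_le : \sum_x K x y * (P x - c) <=
    (1 - #|X|%:R * c) * expR eps * push K Q y.
  apply: le_trans (_ : \sum_x expR eps * push K Q y * (P x - c) <= _).
    apply: ler_sum => x _.
    by rewrite ler_wpM2r ?subr_ge0 ?kernel_le_expR_push.
  by rewrite -mulr_sumr sum_excess mulrC mulrA.
have base_le : \sum_x K x y * c <= push K Q y.
  by apply: ler_sum => x _; rewrite ler_wpM2l.
by rewrite push_split mulrDl mul1r lerD.
Qed.

Lemma kernel_mass_le_vertex (A : pred Y) x x0 :
  \sum_(y | A y) K x y <= expR eps *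
    (c * \sum_(y | A y) \sum_z K z y + (1 - #|X|%:R * c) * \sum_(y | A y) K x0 y).
Proof.
have -> : expR eps * (c * \sum_(y | A y) \sum_z K z y +
      (1 - #|X|%:R * c) * \sum_(y | A y) K x0 y) =
    \sum_(y | A y) expR eps * push K (vertex_distr c x0) y.
  under [RHS]eq_bigr do rewrite push_vertex_distr.
  by rewrite -mulr_sumr big_split /= -!mulr_sumr.
apply: ler_sum => y _; apply: kernel_le_expR_push.
exact: vertex_distr_Qc (ltW c_gt0) Nc_le1.
Qed.

Lemma kernel_mass_diff_le_Xi (A : pred Y) x x' :
  \sum_(y | A y) K x y - \sum_(y | A y) K x' y <= Xi X eps c.
Proof.
pose G z := \sum_(y | A y) K z y.
have mass_compl z : \sum_(y | ~~ A y) K z y = 1 - G z.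
  have := proj2 (K_kernel z); rewrite (bigID A) /= => <-.
  by rewrite /G addrC addrK.
have entries_compl : \sum_(y | ~~ A y) \sum_z K z y =
    #|X|%:R - \sum_(y | A y) \sum_z K z y.
  have := sum_kernel_entries K K_kernel; rewrite (bigID A) /= => <-.
  by rewrite addrC addrK.
have mass_x := kernel_mass_le_vertex A x x'.
have mass_x' := kernel_mass_le_vertex (predC A) x' x.
rewrite /= mass_compl mass_compl entries_compl -/(G x) -/(G x') in mass_x mass_x'.
have Gx_le1 : G x <= 1.
  by rewrite -subr_ge0 -mass_compl; apply: sumr_ge0 => y _.
have Gx'_ge0 : 0 <= G x' by apply: sumr_ge0 => y _.
have ek_ge0 : 0 <= expR eps * (1 - #|X|%:R * c).
  by rewrite mulr_ge0 ?expR_ge0 ?subr_ge0.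
rewrite -/(G x) -/(G x') /Xi le_min ler_pdivlMr; last by lra.
by apply/andP; split; lra.
Qed.

Lemma pos_part_push_le_Xi_TV (P Q : X -> R) : Qc c P -> Qc c Q ->
  \sum_y Num.max (push K P y - push K Q y) 0 <= Xi X eps c * TV P Q.
Proof.
move=> [[_ P_sum1] _] [[_ Q_sum1] _].
have sum_PQ : \sum_x (P x - Q x) = 0 by rewrite sumrB P_sum1 Q_sum1 subrr.
pose A := [pred y | push K Q y < push K P y].
have -> : \sum_y Num.max (push K P y - push K Q y) 0 =
    \sum_(y | A y) (push K P y - push K Q y).
  rewrite (bigID A) /= [X in _ + X]big1 ?addr0 => [|y]; last first.
    by rewrite -leNgt => QP_le; rewrite max_r // subr_le0.
  by apply: eq_bigr => y PQ_lt; rewrite max_l // subr_ge0 ltW.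
have -> : \sum_(y | A y) (push K P y - push K Q y) =
    \sum_x (P x - Q x) * \sum_(y | A y) K x y.
  transitivity (\sum_(y | A y) \sum_x (P x - Q x) * K x y).
    by apply: eq_bigr => y _; rewrite /push -sumrB; apply: eq_bigr => x _ /=; ring.
  by rewrite exchange_big /=; apply: eq_bigr => x _; rewrite mulr_sumr.
rewrite -(sum_pos_part_eq_TV _ P Q) ?P_sum1 ?Q_sum1 //.
apply: sum_mul_le_spread sum_PQ _ => x x'.
exact: kernel_mass_diff_le_Xi.
Qed.

Lemma KL_push_le (P Q : X -> R) : Qc c P -> Qc c Q ->
  KL (push K P) (push K Q) <=
    ln ((1 - #|X|%:R * c) * expR eps + 1) * (Xi X eps c * TV P Q).
Proof.
move=> P_Qc Q_Qc; have [[P_ge0 P_sum1] _] := P_Qc; have [[Q_ge0 Q_sum1] _] := Q_Qc.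
have b_ge1 : 1 <= (1 - #|X|%:R * c) * expR eps + 1.
  by rewrite lerDr mulr_ge0 ?expR_ge0 ?subr_ge0.
apply: le_trans (KL_le_ln_pos_part _ _ _ _ _ _ _ b_ge1 _ _) _.
- by move=> y; apply: push_ge0.
- by move=> y; apply: push_ge0.
- by rewrite !sum_push // P_sum1 Q_sum1.
- by move=> y; apply: push_le_ratio.
- by move=> y; apply: push_le_ratio.
by rewrite ler_wpM2l ?ln_ge0 ?pos_part_push_le_Xi_TV.
Qed.

End LeakageBoundedKernel.

Theorem corollary1 (R : realType) (X Y : finType) (c eps delta : R)
  (K : X -> Y -> R) :
  (2 <= #|X|)%N ->
  0 < c -> c <= (#|X|%:R)^-1 ->
  0 <= eps ->
  in_M eps c K ->
  forall P Q : X -> R, Qc c P -> Qc c Q ->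
  TV P Q <= delta ->
  KL (push K P) (push K Q) <=
    Xi X eps c * ln ((1 - #|X|%:R * c) * expR eps + 1) * delta.
Proof.
move=> N_ge2 c_gt0 c_le eps_ge0 K_M P Q P_Qc Q_Qc TV_le.
have N_gt0 : 0 < #|X|%:R :> R by rewrite ltr0n (leq_trans _ N_ge2).
have Nc_le1 : #|X|%:R * c <= 1 by rewrite -ler_pdivlMl // mulr1.
have ln_ge0 : 0 <= ln ((1 - #|X|%:R * c) * expR eps + 1).
  by rewrite ln_ge0 // lerDr mulr_ge0 ?expR_ge0 ?subr_ge0.
apply: le_trans (KL_push_le c_gt0 K_M Nc_le1 P Q P_Qc Q_Qc) _.
by rewrite -mulrA mulrCA ler_wpM2l ?Xi_ge0 // ler_wpM2l.
Qed.
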